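(* Let $P=(P_1,\dots,P_n)$ be a probability vector, let $\Delta>0$, and let $\gamma>0$ and $\delta>0$ satisfy $$\sum_{i=1}^n\min(\delta,\gamma P_i)=1\qquad\text{and}\qquad \sum_{i:\ \gamma P_i<\delta}P_i=1-\Delta.$$ Define the probability vector $Q^*$ by $Q^*_i=\min(\delta,\gamma P_i)$. Then every $\lambda>0$ with $\alpha_\lambda(P\Vert Q^* )=1-\Delta$ satisfies $\beta_\lambda(P\Vert Q^* )\ge 1-\Delta$.
   Context: For probability vectors $P,Q$ on $\{1,\dots,n\}$ and $\lambda>0$: $\alpha_\lambda(P\Vert Q)=\sum_i\min(\lambda P_i,Q_i)$ (Precision) and $\beta_\lambda(P\Vert Q)=\sum_i\min(P_i,Q_i/\lambda)$ (Recall). The vector $Q^*$ is the paper's candidate minimizer of the ''TruncR'' loss $-\sum_i P_i\mathbf 1_{\{Q_i<\delta\}}\log Q_i$ under the quantile constraint $\sum_{i:Q_i<\delta}P_i=1-\Delta$. *)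

From mathcomp Require Import all_boot all_order all_algebra.
Set Implicit Arguments. Unset Strict Implicit. Unset Printing Implicit Defensive.
Import Order.TTheory GRing.Theory Num.Theory.
Local Open Scope ring_scope.

Definition is_prob_vec (R : realFieldType) (n : nat) (P : 'I_n -> R) : Prop :=
  (forall i, 0 <= P i) /\ \sum_(i < n) P i = 1.

Definition alpha_pr (R : realFieldType) (n : nat) (lam : R) (P Q : 'I_n -> R) : R :=
  \sum_(i < n) Num.min (lam * P i) (Q i).

Definition beta_rc (R : realFieldType) (n : nat) (lam : R) (P Q : 'I_n -> R) : R :=
  \sum_(i < n) Num.min (P i) (Q i / lam).

Definition Qstar (R : realFieldType) (n : nat) (gam del : R) (P : 'I_n -> R) : 'I_n -> R :=
  fun i => Num.min del (gam * P i).

From mathcomp Require Import all_boot all_order all_algebra lra.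
Import Order.TTheory GRing.Theory Num.Theory.
Local Open Scope ring_scope.

(* Termwise, [min(P_i, Q_i / lam) = min(lam P_i, Q_i) / lam], so recall is
   precision divided by [lam] and it suffices to show [lam <= 1].  If
   [gam <= lam] then [Q* <= lam P] pointwise, so precision is [sum Q* = 1],
   contradicting [Delta > 0].  If [1 < lam < gam] then on [{gam P_i < del}] the
   minimum is [lam P_i], so precision is at least [lam (1 - Delta) > 1 - Delta]. *)

Section PrecisionRecall.
Variables (R : realFieldType) (n : nat).
Implicit Types (P Q : 'I_n -> R) (lam : R).

Lemma min_divr (a b l : R) : 0 < l -> Num.min a (b / l) = Num.min (l * a) b / l.
Proof.
move=> l_gt0; case: (leP (l * a) b) => [lab | bla].
- have a_le : a <= b / l by rewrite ler_pdivlMr // mulrC.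
  by rewrite (min_l a_le) mulrC mulKf ?gt_eqF.
- have b_le : b / l <= a by rewrite ler_pdivrMr // mulrC ltW.
  by rewrite (min_r b_le).
Qed.

Lemma beta_rcE lam P Q : 0 < lam -> beta_rc lam P Q = alpha_pr lam P Q / lam.
Proof.
move=> lam_gt0; rewrite /beta_rc /alpha_pr mulr_suml.
by apply: eq_bigr => i _; exact: min_divr.
Qed.

Lemma alpha_pr_dominated lam P Q :
  (forall i, Q i <= lam * P i) -> alpha_pr lam P Q = \sum_(i < n) Q i.
Proof. by move=> QlePl; apply: eq_bigr => i _; rewrite min_r. Qed.

Lemma alpha_pr_ge_mass lam P Q (S : pred 'I_n) :
  (forall i, 0 <= lam * P i) -> (forall i, 0 <= Q i) ->
  (forall i, S i -> lam * P i <= Q i) ->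
  lam * \sum_(i < n | S i) P i <= alpha_pr lam P Q.
Proof.
move=> lamP_ge0 Q_ge0 PleQ; rewrite /alpha_pr mulr_sumr [X in _ <= X](bigID S) /=.
rewrite -[leLHS]addr0 lerD //.
  by apply: ler_sum => i Si; rewrite min_l ?PleQ.
by apply: sumr_ge0 => i _; rewrite le_min lamP_ge0 Q_ge0.
Qed.

End PrecisionRecall.

Theorem propositionB3 (R : realFieldType) (n : nat) (P : 'I_n -> R)
    (Delta gam del : R) :
  is_prob_vec P ->
  0 < Delta -> 0 < gam -> 0 < del ->
  \sum_(i < n) Num.min del (gam * P i) = 1 ->
  \sum_(i < n | gam * P i < del) P i = 1 - Delta ->
  forall lam : R, 0 < lam ->
    alpha_pr lam P (Qstar gam del P) = 1 - Delta ->
    1 - Delta <= beta_rc lam P (Qstar gam del P).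
Proof.
move=> [P_ge0 _] Delta_gt0 gam_gt0 del_gt0 sumQ massS lam lam_gt0 alphaE.
rewrite beta_rcE // alphaE.
have mass_ge0 : 0 <= 1 - Delta by rewrite -massS sumr_ge0.
have [->|mass_neq0] := eqVneq (1 - Delta) 0; first by rewrite mul0r.
have mass_gt0 : 0 < 1 - Delta by rewrite lt_def mass_neq0.
rewrite ler_pdivlMr // ger_pMr // leNgt; apply/negP => lam_gt1.
have [gam_le|lam_lt] := leP gam lam.
- have : alpha_pr lam P (Qstar gam del P) = 1.
    rewrite -sumQ alpha_pr_dominated // => i.
    by rewrite /Qstar ge_min ler_wpM2r ?orbT.
  by rewrite alphaE; lra.
- have : lam * (1 - Delta) <= alpha_pr lam P (Qstar gam del P).
    rewrite -massS; apply: alpha_pr_ge_mass => i.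
    + by rewrite mulr_ge0 ?P_ge0 ?ltW.
    + by rewrite /Qstar le_min ltW // mulr_ge0 ?P_ge0 ?ltW.
    + move=> /ltW gP_le.
      have lP_le : lam * P i <= gam * P i by rewrite ler_wpM2r ?P_ge0 ?ltW.
      by rewrite /Qstar le_min lP_le (le_trans lP_le gP_le).
  by rewrite alphaE ger_pMl // leNgt lam_gt1.
Qed.
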